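(* Let $k\ge s\ge r\ge 1$ be fixed integers and let $H$ be a fixed $s$-uniform hypergraph with $k$ vertices and $m\ge 1$ edges. Then for every strategy $\mathcal S$ and every $t=t(n)=o\!\left(n^{\,r-(k-s+r)/m}\right)$, a.a.s. $G^{(r,s)}_t$ does not contain a copy of $H$. Consequently $\tau^{(r)}(H)\ge n^{\,r-(k-s+r)/m}$.
   Context: Semi-random hypergraph process: fix integers $1\le r\le s$ and $n\ge s$. Start with the empty $s$-uniform multi-hypergraph $G_0^{(r,s)}$ on vertex set $[n]=\{1,\dots,n\}$. In each step $t\ge1$, a set $U_t$ of $r$ vertices is chosen uniformly at random among all $r$-subsets of $[n]$, independently of all previous choices; the player then chooses a set $V_t$ of $s-r$ vertices of $[n]\setminus U_t$ (when $r=s$, $V_t=\emptyset$), and the edge $U_t\cup V_t$ is added to $G^{(r,s)}_{t-1}$ to form $G^{(r,s)}_t$ (parallel edges are allowed). A strategy is, for each $n$, a sequence of functions $(f_t)_{t\ge1}$ with $V_t=f_t(U_1,V_1,\dots,U_{t-1},V_{t-1},U_t)$. An event holds a.a.s. if its probability tends to $1$ as $n\to\infty$; $a_n\gg b_n$ means $b_n=o(a_n)$. ''$G_t^{(r,s)}$ contains $H$'' means $G_t^{(r,s)}$ has a sub-hypergraph isomorphic to $H$. For a function $f(n)$: ''$\tau^{(r)}(H)\le f$'' means there is a strategy such that for every $t=t(n)\gg f(n)$, a.a.s. $G^{(r,s)}_t$ contains $H$; ''$\tau^{(r)}(H)\ge f$'' means for every strategy and every $t=t(n)=o(f(n))$,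 a.a.s. $G^{(r,s)}_t$ does not contain $H$; ''$\tau^{(r)}(H)=f$'' means both hold. *)

From Stdlib Require Import Reals.
From mathcomp Require Import all_boot.
Set Implicit Arguments. Unset Strict Implicit. Unset Printing Implicit Defensive.

(* A strategy: for each n, given the history ((U_1,V_1),...,(U_{t-1},V_{t-1}))
   and the new random r-set U_t, returns V_t.  (t = length of history + 1.) *)
Definition strategy := forall n : nat,
  seq ({set 'I_n} * {set 'I_n}) -> {set 'I_n} -> {set 'I_n}.

Definition valid_strategy (r s : nat) (S : strategy) : Prop :=
  forall n, s <= n -> forall h (u : {set 'I_n}), #|u| = r ->
    #|S n h u| = s - r /\ [disjoint u & S n h u].

Definition history (S : strategy) n (us : seq {set 'I_n}) :
  seq ({set 'I_n} * {set 'I_n}) :=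
  foldl (fun h u => rcons h (u, S n h u)) [::] us.

Definition edges_of (S : strategy) n (us : seq {set 'I_n}) : seq {set 'I_n} :=
  map (fun p => p.1 :|: p.2) (history S us).

Definition contains_copy k n (H : {set {set 'I_k}}) (G : seq {set 'I_n}) : bool :=
  [exists phi : {ffun 'I_k -> 'I_n},
     injectiveb phi && [forall e in H, (phi @: e) \in G]].

(* Probability (uniform over the independent choices of U_1..U_t among r-subsets)
   that G_t^{(r,s)} contains H. *)
Definition prob_contains (r : nat) (S : strategy) k (H : {set {set 'I_k}})
  (n t : nat) : R :=
  Rdiv (INR (#|[set w : t.-tuple {set 'I_n} |
           all (fun u : {set 'I_n} => #|u| == r) (val w) && contains_copy H (edges_of S (val w))]|))
   (INR ('C(n, r) ^ t)%nat).

Definition little_o (f g : nat -> R) : Prop :=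
  forall eps : R, Rlt 0 eps -> exists N : nat, forall n : nat, N <= n ->
    Rle (Rabs (f n)) (Rmult eps (Rabs (g n))).

(* tau^{(r)}(H) >= f : for every strategy and every t = o(f), a.a.s. G_t does
   not contain H, i.e. P(G_t contains H) -> 0. *)
Definition tau_ge (r s : nat) k (H : {set {set 'I_k}}) (f : nat -> R) : Prop :=
  forall S : strategy, valid_strategy r s S ->
  forall t : nat -> nat, little_o (fun n => INR (t n)) f ->
    Un_cv (fun n => prob_contains r S H n (t n)) (IZR 0).

From Stdlib Require Import Reals Lra.
From mathcomp Require Import all_boot zify.
Set Implicit Arguments. Unset Strict Implicit. Unset Printing Implicit Defensive.

(* First moment method.  Fix an ordering e_1, ..., e_m of the edges of H.  A copy
   of H in G_t, with its edges listed by position in G_t, is a map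
   psi : [k] -> [n] together with increasing positions carrying the edges
   psi(e_1), ..., psi(e_m); the number B_j(t) of such partial placements of
   e_1, ..., e_j, summed over all C(n,r)^t draw sequences, bounds the number of
   bad sequences for j = m.  Splitting on whether the last draw is used gives
   B_{j+1}(t+1) <= C(n,r) B_{j+1}(t) + 2^k B_j(t), since a draw U whose edge
   equals a prescribed set P must be a subset of P; and the first edge fixes
   psi on e_1 up to s^s n^(k-s) choices.  Hence B_m(t) = O(t^m n^(k-s)
   C(n,r)^(t-m+1)), so P(H in G_t) = O((t / n^(r-(k-s+r)/m))^m) -> 0. *)

Open Scope R_scope.

Lemma INR_muln (a b : nat) : INR (a * b)%N = INR a * INR b.
Proof. by rewrite mulnE mult_INR. Qed.

Lemma INR_expn (a b : nat) : INR (a ^ b)%N = INR a ^ b.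
Proof. by elim: b => [|b IHb] //; rewrite expnS INR_muln IHb. Qed.

Lemma pow_Rpower_threshold (x : R) (r s k m : nat) :
  0 < x -> (0 < m)%N -> (s <= k)%N ->
  x ^ (k - s) * Rpower x (INR r - (INR k - INR s + INR r) / INR m) ^ m
  = x ^ (r * m.-1).
Proof.
move=> x_gt0 m_gt0 le_sk.
have m_neq0 : INR m <> 0 by apply: not_0_INR; lia.
have f_gt0 : 0 < Rpower x (INR r - (INR k - INR s + INR r) / INR m) by apply: exp_pos.
rewrite -(@Rpower_pow m _ f_gt0) Rpower_mult.
have -> : (INR r - (INR k - INR s + INR r) / INR m) * INR m
    = INR (r * m.-1) + - INR (k - s).
  rewrite mult_INR minus_INR; last exact/leP.
  rewrite -(prednK m_gt0) S_INR /= in m_neq0 *; field; exact: m_neq0.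
rewrite Rpower_plus Rpower_Ropp !Rpower_pow //; field.
by apply: pow_nonzero; lra.
Qed.

Lemma Un_cv0_of_pow_little_o (p f g : nat -> R) (K : R) (m N0 : nat) :
  (0 < m)%N -> 0 <= K -> little_o g f ->
  (forall n, (N0 <= n)%N ->
     0 <= p n /\ 0 < f n /\ p n * f n ^ m <= K * Rabs (g n) ^ m) ->
  Un_cv p 0.
Proof.
move=> m_gt0 K_ge0 g_o_f p_le eps eps_gt0.
pose e1 := Rmin 1 (eps / (K + 1)).
have e1_gt0 : 0 < e1 by apply: Rmin_pos; [lra | apply: Rdiv_lt_0_compat; lra].
have [N le_g] := g_o_f e1 e1_gt0.
exists (N + N0)%N => n /leP le_n; have [p_ge0 [f_gt0 le_pf]] := p_le n ltac:(lia).
have le_gf : Rabs (g n) <= e1 * f n.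
  by rewrite -[f n]Rabs_pos_eq; [apply: le_g; lia | lra].
have le_pow : Rabs (g n) ^ m <= e1 * f n ^ m.
  apply: Rle_trans (pow_incr _ _ m (conj (Rabs_pos _) le_gf)) _.
  rewrite Rpow_mult_distr; apply: Rmult_le_compat_r; first by apply: pow_le; lra.
  rewrite -(prednK m_gt0) /= -[X in _ <= X]Rmult_1_r.
  apply: Rmult_le_compat_l; first lra.
  by rewrite -(pow1 m.-1); apply: pow_incr; split; [lra | apply: Rmin_l].
have le_p : p n <= K * e1.
  apply: (Rmult_le_reg_r (f n ^ m)); first exact: pow_lt.
  apply: Rle_trans le_pf _; rewrite Rmult_assoc.
  exact: Rmult_le_compat_l.
have le_Ke1 : K * e1 <= K * (eps / (K + 1)) by apply: Rmult_le_compat_l; last apply: Rmin_r.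
have lt_eps : K * (eps / (K + 1)) < eps.
  apply: (Rmult_lt_reg_r (K + 1)); first lra.
  by rewrite Rmult_assoc /Rdiv Rmult_assoc Rinv_l; lra.
rewrite /R_dist Rminus_0_r Rabs_pos_eq; lra.
Qed.

Close Scope R_scope.

(* Imported only now: its [ring] and [field] shadow the Stdlib tactics used on [R] above. *)
From mathcomp Require Import ring.

Section SubseqCount.
Variable T : eqType.

Fixpoint nembed (s g : seq T) : nat :=
  match s, g with
  | [::], _ => 1
  | _ :: _, [::] => 0
  | y :: s', x :: g' => nembed s g' + (x == y) * nembed s' g'
  end.

(* Number of ways [s] occurs as a subsequence of [g]; the recursion runs from
   the right end so that it unfolds along [rcons]. *)
Definition nsubseq (s g : seq T) : nat := nembed (rev s) (rev g).

Lemma nsubseq0s g : nsubseq [::] g = 1.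
Proof. by rewrite /nsubseq; case: (rev g). Qed.

Lemma nsubseq_rcons0 s y : nsubseq (rcons s y) [::] = 0.
Proof. by rewrite /nsubseq rev_rcons. Qed.

Lemma nsubseq_rcons s y g x :
  nsubseq (rcons s y) (rcons g x) = nsubseq (rcons s y) g + (x == y) * nsubseq s g.
Proof. by rewrite /nsubseq !rev_rcons. Qed.

Lemma nembed_gt0 s g : subseq s g -> 0 < nembed s g.
Proof.
elim: g s => [|x g IHg] [|y s] //=.
case: eqVneq => [-> | _] sub_sg; last by rewrite addn_gt0 IHg.
by rewrite /= mul1n addn_gt0 (IHg _ sub_sg) orbT.
Qed.

Lemma nsubseq_gt0 s g : subseq s g -> 0 < nsubseq s g.
Proof. by move=> sub_sg; apply: nembed_gt0; rewrite subseq_rev. Qed.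

End SubseqCount.

Section Draws.
Variables (n r : nat) (S : strategy).
Local Notation X := {set 'I_n}.

Definition rsets : seq X := enum [set u : X | #|u| == r].

Fixpoint draws (t : nat) : seq (seq X) :=
  if t is t'.+1 then [seq rcons w u | w <- draws t', u <- rsets] else [:: [::]].

Lemma size_rsets : size rsets = 'C(n, r).
Proof. by rewrite /rsets -cardE card_draws card_ord. Qed.

Lemma size_draws t : size (draws t) = 'C(n, r) ^ t.
Proof. by elim: t => //= t IHt; rewrite size_allpairs IHt size_rsets expnSr. Qed.

Lemma draws_uniq t : uniq (draws t).
Proof.
elim: t => //= t IHt; apply: allpairs_uniq => //; first exact: enum_uniq.
by move=> [a b] [c d] _ _ /= /rcons_inj [-> ->].
Qed.

Lemma mem_draws t w :
  (w \in draws t) = (size w == t) && all (fun u : X => #|u| == r) w.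
Proof.
elim: t w => [|t IHt] w /=; first by rewrite inE; case: w.
apply/allpairsP/idP.
  move=> [[a b] /= [+ + ->]]; rewrite IHt mem_enum inE => /andP [/eqP <- all_a] card_b.
  by rewrite size_rcons all_rcons eqxx card_b all_a.
case/lastP: w => [|w u] //; rewrite size_rcons all_rcons eqSS.
move=> /andP [size_w /andP [card_u all_w]].
by exists (w, u); rewrite /= IHt size_w all_w mem_enum inE.
Qed.

Lemma card_tuples_draws t (P : pred (seq X)) :
  #|[set w : t.-tuple X | all (fun u : X => #|u| == r) (val w) && P (val w)]|
  = count P (draws t).
Proof.
rewrite cardE -(size_map val) -size_filter; apply/perm_size/uniq_perm.
- by rewrite (map_inj_uniq val_inj) enum_uniq.
- by rewrite filter_uniq // draws_uniq.
move=> w; rewrite mem_filter mem_draws; apply/mapP/idP.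
  by move=> [x]; rewrite mem_enum inE => /andP [Ha Hp] ->; rewrite Hp size_tuple eqxx.
move=> /andP [Hp /andP [size_w Ha]].
by exists (Tuple size_w); rewrite // mem_enum inE /= Ha Hp.
Qed.

Definition played_edge (w : seq X) (u : X) : X := u :|: S (history S w) u.

Lemma edges_of_rcons w u :
  edges_of S (rcons w u) = rcons (edges_of S w) (played_edge w u).
Proof. by rewrite /edges_of /history foldl_rcons map_rcons. Qed.

Lemma card_played_edge s w (u : X) : valid_strategy r s S -> s <= n -> r <= s ->
  #|u| = r -> #|played_edge w u| <= s.
Proof.
move=> valid_S le_sn le_rs card_u; have [card_v _] := valid_S n le_sn (history S w) u card_u.
by apply: leq_trans (leq_card_setU _ _) _; rewrite card_u card_v subnKC.
Qed.

Lemma sum_played_edge_eq w (P : X) :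
  \sum_(u <- rsets) (played_edge w u == P) <= 2 ^ #|P|.
Proof.
apply: (@leq_trans (\sum_(u : X) (u \subset P))).
  rewrite /rsets big_enum /= [X in _ <= X](bigID (mem [set u : X | #|u| == r])) /=.
  apply: leq_trans (leq_addr _ _); apply: leq_sum => u _.
  by case: eqP => //= <-; rewrite lt0b subsetUl.
rewrite -card_powerset -sum1_card [X in _ <= X]big_mkcond /=.
by apply: leq_sum => u _; rewrite powersetE.
Qed.

End Draws.

Lemma sum_ffun_imset_eq k n (e : {set 'I_k}) (E : {set 'I_n}) :
  \sum_(psi : {ffun 'I_k -> 'I_n}) (psi @: e == E) <= #|E| ^ #|e| * n ^ (k - #|e|).
Proof.
pose F (x : 'I_k) := if x \in e then mem E else mem [set: 'I_n].
apply: (@leq_trans #|family F|).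
  rewrite -sum1_card [X in _ <= X]big_mkcond /=; apply: leq_sum => psi _.
  case: eqP => //= psi_e; rewrite lt0b; apply/familyP => x.
  by rewrite /F -psi_e; case: ifP => e_x; rewrite ?imset_f ?inE.
rewrite card_family foldrE big_map big_enum /= (bigID (mem e)) /=.
rewrite (eq_bigr (fun _ => #|E|)) => [|x e_x]; last by rewrite /F e_x.
rewrite [X in _ * X](eq_bigr (fun _ => n)) => [|x /negbTE e'_x]; last first.
  by rewrite /F e'_x cardsT card_ord.
rewrite !prod_nat_const; apply: eq_leq; congr (_ ^ _ * _ ^ _).
rewrite (@eq_card _ _ (~: e)) => [|x]; last by rewrite inE.
by rewrite [#|~: e|]cardsCs setCK card_ord.
Qed.

Lemma sum_nat_const_seq (T : Type) (s : seq T) (c : nat) :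
  \sum_(i <- s) c = size s * c.
Proof. by rewrite big_const_seq count_predT iter_addn_0 mulnC. Qed.

Lemma leq_expn_add_succ t a : t ^ a.+1 + t ^ a <= t.+1 ^ a.+1.
Proof.
rewrite [t ^ a.+1]expnS [X in _ <= X]expnS -[X in _ + X]mul1n -mulnDl addn1.
by rewrite leq_mul //; case: a => [//|a]; rewrite leq_exp2r.
Qed.

Section Placements.
Variables (n r k : nat) (S : strategy) (es : seq {set 'I_k}).
Local Notation X := {set 'I_n}.
Local Notation C := 'C(n, r).

Definition placements j (w : seq X) : nat :=
  \sum_(psi : {ffun 'I_k -> 'I_n})
    nsubseq [seq psi @: e | e : {set 'I_k} <- take j es] (edges_of S w).

Definition total_placements j t : nat := \sum_(w <- draws n r t) placements j w.

Lemma placements_rcons j w u : j < size es ->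
  placements j.+1 (rcons w u) = placements j.+1 w +
  \sum_(psi : {ffun 'I_k -> 'I_n}) (played_edge S w u == psi @: nth set0 es j) *
     nsubseq [seq psi @: e | e : {set 'I_k} <- take j es] (edges_of S w).
Proof.
move=> lt_j; rewrite /placements -big_split /=; apply: eq_bigr => psi _.
by rewrite (take_nth set0 lt_j) map_rcons edges_of_rcons nsubseq_rcons.
Qed.

Lemma total_placements0 j : 0 < j <= size es -> total_placements j 0 = 0.
Proof.
case: j => // j /andP [_ lt_j]; rewrite /total_placements big_seq1.
by apply: big1 => psi _; rewrite (take_nth set0 lt_j) map_rcons nsubseq_rcons0.
Qed.

Lemma total_placements_rec j t : j < size es ->
  total_placements j.+1 t.+1 <= C * total_placements j.+1 t + 2 ^ k * total_placements j t.
Proof.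
move=> lt_j; rewrite /total_placements /= big_allpairs_dep /=.
rewrite !big_distrr -big_split /=; apply: leq_sum => w _.
under eq_bigr do rewrite placements_rcons //.
rewrite big_split /= sum_nat_const_seq size_rsets leq_add2l.
rewrite exchange_big /= /placements big_distrr /=; apply: leq_sum => psi _.
rewrite -big_distrl leq_mul2r; apply/orP; right.
apply: leq_trans (sum_played_edge_eq _ _ _ _) _; rewrite leq_exp2l //.
apply: leq_trans (leq_imset_card _ _) _.
by apply: leq_trans (max_card _) _; rewrite card_ord.
Qed.

Section FirstEdge.
Variable s : nat.
Hypotheses (card_e0 : #|nth set0 es 0| = s) (le_sn : s <= n)
  (valid_S : valid_strategy r s S) (le_rs : r <= s).
Local Notation c1 := (s ^ s * n ^ (k - s)).

Lemma total_placements1_rec t : 0 < size es ->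
  total_placements 1 t.+1 <= C * total_placements 1 t + c1 * C ^ t.+1.
Proof.
move=> es_gt0.
have -> : c1 * C ^ t.+1 = \sum_(w <- draws n r t) (c1 * C).
  by rewrite sum_nat_const_seq size_draws expnSr mulnCA mulnA.
rewrite /total_placements /= big_allpairs_dep /= big_distrr -big_split /=.
apply: leq_sum => w _; under eq_bigr do rewrite placements_rcons //.
rewrite big_split /= sum_nat_const_seq size_rsets leq_add2l mulnC -size_rsets.
rewrite -sum_nat_const_seq big_seq [X in _ <= X]big_seq; apply: leq_sum => u.
rewrite mem_enum inE => /eqP card_u.
under eq_bigr do rewrite take0 nsubseq0s muln1 eq_sym.
apply: leq_trans (sum_ffun_imset_eq _ _) _; rewrite card_e0 leq_mul2r.
apply/orP; right; case: (posnP s) => [-> // | s_gt0].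
by rewrite leq_exp2r // (card_played_edge _ valid_S le_sn le_rs card_u).
Qed.

Lemma total_placements_bound i t : i < size es ->
  total_placements i.+1 t * C ^ i <= c1 * 2 ^ (k * i) * t ^ i.+1 * C ^ t.
Proof.
elim: i t => [|i IHi] t lt_i.
  elim: t => [|t IHt]; first by rewrite total_placements0 ?lt_i.
  rewrite !muln0 !expn0 !muln1 in IHt *.
  apply: leq_trans (total_placements1_rec t lt_i) _.
  apply: leq_trans (leq_add (leq_mul (leqnn C) IHt) (leqnn _)) _.
  by rewrite !expn1 expnS; apply: eq_leq; ring.
have lt_i' : i < size es by apply: ltnW.
elim: t => [|t IHt]; first by rewrite total_placements0 ?lt_i.
apply: leq_trans (leq_mul (total_placements_rec t lt_i) (leqnn (C ^ i.+1))) _.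
have -> : (C * total_placements i.+2 t + 2 ^ k * total_placements i.+1 t) * C ^ i.+1
    = C * (total_placements i.+2 t * C ^ i.+1)
      + 2 ^ k * C * (total_placements i.+1 t * C ^ i).
  by rewrite expnS; ring.
apply: leq_trans (leq_add (leq_mul (leqnn C) IHt) (leq_mul (leqnn _) (IHi t lt_i'))) _.
apply: (@leq_trans (c1 * 2 ^ (k * i.+1) * C ^ t.+1 * (t ^ i.+2 + t ^ i.+1))).
  by rewrite mulnS expnD !expnS; apply: eq_leq; ring.
by rewrite [X in _ <= X]mulnAC leq_mul // leq_expn_add_succ.
Qed.

End FirstEdge.
End Placements.

(* List, in the order of [G], the distinct edges of [G] hit by the copy of [H];
   their preimages enumerate the m edges of [H]. *)
Lemma contains_copy_subseq k n m (H : {set {set 'I_k}}) (G : seq {set 'I_n}) :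
  #|H| = m -> contains_copy H G ->
  exists2 es : m.-tuple {set 'I_k}, all (mem H) es &
    exists phi : {ffun 'I_k -> 'I_n}, subseq [seq phi @: e | e : {set 'I_k} <- es] G.
Proof.
move=> card_H /existsP [phi /andP [/injectiveP inj_phi /forall_inP phiH_G]].
pose L := [seq phi @: e | e : {set 'I_k} <- enum H].
pose p := [seq x <- undup G | x \in L].
pose es := [seq phi @^-1: x | x : {set 'I_n} <- p].
have memL x : x \in L -> exists2 e, e \in H & x = phi @: e.
  by move/mapP => [e]; rewrite mem_enum => He ->; exists e.
have preim_im (e : {set 'I_k}) : phi @^-1: (phi @: e) = e.
  by apply/setP => x; rewrite inE mem_imset.
have im_es : [seq phi @: e | e : {set 'I_k} <- es] = p.
  rewrite -map_comp; apply: map_id_in => x.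
  by rewrite mem_filter => /andP [/memL [e _ ->] _] /=; rewrite preim_im.
have size_es : size es == m.
  rewrite size_map -card_H cardE -(size_map (fun e : {set 'I_k} => phi @: e)).
  apply/eqP/perm_size/uniq_perm.
  - by rewrite filter_uniq // undup_uniq.
  - by rewrite map_inj_in_uniq ?enum_uniq // => a b _ _; apply: imset_inj.
  move=> x; rewrite mem_filter mem_undup; apply/andP/idP => [[]//|Lx].
  by split=> //; have [e He ->] := memL x Lx; apply: phiH_G.
exists (Tuple size_es).
  apply/allP => y /mapP [x]; rewrite mem_filter => /andP [/memL [e He ->] _] ->.
  by rewrite preim_im.
exists phi; rewrite /= im_es.
exact: subseq_trans (filter_subseq _ _) (undup_subseq _).
Qed.

Lemma count_contains_copy_le n r s k m (S : strategy) (H : {set {set 'I_k}}) t :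
  s <= n -> valid_strategy r s S -> r <= s ->
  (forall e, e \in H -> #|e| = s) -> #|H| = m -> 0 < m ->
  count (fun w => contains_copy H (edges_of S w)) (draws n r t) * 'C(n, r) ^ m.-1
   <= #|{: m.-tuple {set 'I_k}}|
      * (s ^ s * n ^ (k - s) * 2 ^ (k * m.-1) * t ^ m * 'C(n, r) ^ t).
Proof.
move=> le_sn valid_S le_rs card_H_e card_H m_gt0.
rewrite -sum1_count; apply: (@leq_trans ((\sum_(w <- draws n r t)
    \sum_(es : m.-tuple {set 'I_k} | all (mem H) es) placements S es m w)
    * 'C(n, r) ^ m.-1)).
  rewrite leq_mul2r big_mkcond /=; apply/orP; right; apply: leq_sum => w _.
  case: ifP => // /(contains_copy_subseq card_H) [es H_es [phi sub_es]].
  rewrite (bigD1 es) //= ltn_addr // /placements (bigD1 phi) //= ltn_addr //.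
  by rewrite take_oversize ?size_tuple // nsubseq_gt0.
rewrite exchange_big /= big_distrl /= -sum_nat_const big_mkcond /=.
apply: leq_sum => es _; case: ifP => // H_es.
have lt_m1 : m.-1 < size es by rewrite size_tuple prednK.
have card_e0 : #|nth set0 es 0| = s.
  by apply/card_H_e/(allP H_es)/mem_nth; rewrite size_tuple.
by have := total_placements_bound card_e0 le_sn valid_S le_rs t lt_m1; rewrite prednK.
Qed.

Lemma leq_expn_ffact n r : 2 * r <= n -> n ^ r <= 2 ^ r * n ^_ r.
Proof.
elim: r => [|r IHr] le_2r_n; first by rewrite ffactn0.
rewrite ffactnSr expnSr expnS [2 * _]mulnC mulnACA leq_mul ?IHr //; lia.
Qed.

Lemma leq_expn_bin n r : 2 * r <= n -> n ^ r <= 2 ^ r * r`! * 'C(n, r).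
Proof. by move=> le_2r_n; rewrite -mulnA [r`! * _]mulnC bin_ffact leq_expn_ffact. Qed.

Definition copy_constant (k s r m : nat) : nat :=
  #|{: m.-tuple {set 'I_k}}| * s ^ s * 2 ^ (k * m.-1) * (2 ^ r * r`!) ^ m.-1.

Lemma count_contains_copy_expn_le n r s k m (S : strategy) (H : {set {set 'I_k}}) t :
  s <= n -> 2 * r <= n -> valid_strategy r s S -> r <= s ->
  (forall e, e \in H -> #|e| = s) -> #|H| = m -> 0 < m ->
  count (fun w => contains_copy H (edges_of S w)) (draws n r t) * n ^ (r * m.-1)
   <= copy_constant k s r m * n ^ (k - s) * t ^ m * 'C(n, r) ^ t.
Proof.
move=> le_sn le_2r_n valid_S le_rs card_H_e card_H m_gt0.
have := count_contains_copy_le t le_sn valid_S le_rs card_H_e card_H m_gt0.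
set c := count _ _ => le_c.
apply: (@leq_trans (c * ((2 ^ r * r`!) ^ m.-1 * 'C(n, r) ^ m.-1))).
  rewrite leq_mul2l -expnMn expnM; apply/orP; right.
  by case: m.-1 => [//|i]; rewrite leq_exp2r // leq_expn_bin.
rewrite mulnCA /copy_constant (leq_trans (leq_mul (leqnn _) le_c)) //.
by apply: eq_leq; ring.
Qed.

Open Scope R_scope.

Lemma prob_contains_ge0 r (S : strategy) k (H : {set {set 'I_k}}) n t :
  (r <= n)%N -> 0 <= prob_contains r S H n t.
Proof.
move=> le_rn; apply: Rmult_le_pos; first exact: pos_INR.
by apply/Rlt_le/Rinv_0_lt_compat/lt_0_INR/ltP; rewrite expn_gt0 bin_gt0 le_rn.
Qed.

Lemma prob_contains_pow_le n r s k m (S : strategy) (H : {set {set 'I_k}}) t :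
  (0 < n)%N -> (s <= n)%N -> (2 * r <= n)%N -> valid_strategy r s S ->
  (r <= s)%N -> (s <= k)%N -> (forall e, e \in H -> #|e| = s) -> #|H| = m ->
  (0 < m)%N ->
  prob_contains r S H n t * Rpower (INR n) (INR r - (INR k - INR s + INR r) / INR m) ^ m
  <= INR (copy_constant k s r m) * INR t ^ m.
Proof.
move=> n_gt0 le_sn le_2r_n valid_S le_rs le_sk card_H_e card_H m_gt0.
have := count_contains_copy_expn_le t le_sn le_2r_n valid_S le_rs card_H_e card_H m_gt0.
move: (copy_constant k s r m) => K /leP/le_INR; rewrite !INR_muln !INR_expn.
rewrite /prob_contains (@card_tuples_draws n r t (fun w => contains_copy H (edges_of S w))) INR_expn.
set c := INR (count _ _); set x := INR n; set C := INR 'C(n, r).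
set f := Rpower x _ => le_c.
have x_gt0 : 0 < x by apply: lt_0_INR; apply/ltP.
have Ct_gt0 : 0 < C ^ t.
  by apply/pow_lt/lt_0_INR/ltP; rewrite bin_gt0; lia.
rewrite -(pow_Rpower_threshold r x_gt0 m_gt0 le_sk) -/f in le_c.
have pC : c / C ^ t * C ^ t = c.
  by rewrite /Rdiv Rmult_assoc Rinv_l ?Rmult_1_r //; lra.
apply: (Rmult_le_reg_r (C ^ t)) => //.
apply: (Rmult_le_reg_r (x ^ (k - s))); first exact: pow_lt.
(* [nra] only succeeds once the powers are abstracted into atoms. *)
move: pC le_c; set p := c / _; move: (x ^ _) (f ^ _) (C ^ _) (INR t ^ _) => X F Ct T.
nra.
Qed.

Close Scope R_scope.

Theorem theorem2 (k s r m : nat) (H : {set {set 'I_k}}) :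
  1 <= r -> r <= s -> s <= k ->
  (forall e, e \in H -> #|e| = s) ->
  #|H| = m -> 1 <= m ->
  tau_ge r s H
    (fun n => Rpower (INR n) (Rminus (INR r) (Rdiv (Rplus (Rminus (INR k) (INR s)) (INR r)) (INR m)))).
Proof.
move=> r_gt0 le_rs le_sk card_H_e card_H m_gt0 S valid_S t t_o.
apply: (Un_cv0_of_pow_little_o (K := INR (copy_constant k s r m)) (N0 := s + 2 * r) m_gt0);
  [exact: pos_INR | exact: t_o | move=> n le_n].
split; first by apply: prob_contains_ge0; lia.
split; first exact: exp_pos.
rewrite Rabs_pos_eq; last exact: pos_INR.
apply: prob_contains_pow_le => //; lia.
Qed.
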